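(* Let $X$ be a nonnegative random variable with cumulative distribution function $F$, let $\gamma>0$ with $\mathbb{E}[\mathrm{e}^{\gamma X}]<\infty$, and let $g\in\mathcal{G}$. Let $\mathcal{M}:=\big[1,\int_0^\infty \mathrm{e}^{\gamma x}\,\mathrm{d}F(x)\big]$. For $m\in\mathcal{M}$ define $d(m):=\frac{1}{\gamma}\ln(g'(0)m)$, define $I_m(x):=0$ for $x\in[0,d(m)]$ and, for $x>d(m)$, let $I_m(x)\in(0,x)$ be the unique solution $y$ of $\mathrm{e}^{\gamma(x-y)}-m g'(y)=0$, and set \[ h(m):=\int_0^{d(m)}\mathrm{e}^{\gamma x}\,\mathrm{d}F(x)+\int_{d(m)}^\infty \mathrm{e}^{\gamma(x-I_m(x))}\,\mathrm{d}F(x). \] For any $M_0\in\mathcal{M}$, define $M_n:=h(M_{n-1})$ for $n\ge1$. Then the sequence $\{M_n\}_{n\ge 0}$ admits a limit $M^*=\lim_{n\to\infty}M_n\in\mathcal{M}$.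
   Context: $\mathcal{G}$ is the set of twice differentiable functions $g:\mathbb{R}_+\to\mathbb{R}_+$ with $g''\ge 0$, $g(0)=0$, $g(x)\ge x$ for all $x\ge0$, and $g$ not identically equal to $x\mapsto x$ (so $g'\ge 1$). The iteration $M_n=h(M_{n-1})$ is the paper's algorithm for computing the constant $M=\mathbb{E}[\mathrm{e}^{\gamma(X-\widehat{I}_g(X))}]$ associated with the optimal indemnity for the problem $\inf_{I}\mathbb{E}[\mathrm{e}^{\gamma(X-I(X)+\mathbb{E}[g(I(X))])}]$ over continuous $I$ with $0\le I(x)\le x$. *)

From HB Require Import structures.
From mathcomp Require Import all_boot all_order all_algebra.
From mathcomp Require Import all_classical all_reals all_analysis.
Set Implicit Arguments. Unset Strict Implicit. Unset Printing Implicit Defensive.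
Import Order.TTheory GRing.Theory Num.Theory.
Import numFieldNormedType.Exports.
Local Open Scope classical_set_scope.
Local Open Scope ring_scope.

(* The class G: g twice differentiable, g'' >= 0, g(0) = 0, g(x) >= x,
   g not the identity on R_+.  g is given on all of R; only its values
   and derivatives on [0, +oo) matter. *)
Definition in_G (R : realType) (g : R -> R) : Prop :=
  (forall x : R, derivable g x 1 /\ derivable (derive1 g) x 1) /\
  (forall x : R, 0 <= x -> 0 <= derive1 (derive1 g) x) /\
  g 0 = 0 /\
  (forall x : R, 0 <= x -> 0 <= g x) /\
  (forall x : R, 0 <= x -> x <= g x) /\
  (exists x : R, 0 <= x /\ g x != x).

Definition dlev (R : realType) (gamma : R) (g : R -> R) (m : R) : R :=
  gamma^-1 * ln (derive1 g 0 * m).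

(* I_m(x) = 0 on [0, d(m)]; for x > d(m), the (unique) y in (0, x) with
   exp(gamma (x - y)) - m g'(y) = 0 (chosen with xget; default x if none). *)
Definition Im (R : realType) (gamma : R) (g : R -> R) (m x : R) : R :=
  if x <= dlev gamma g m then 0
  else xget x [set y : R | 0 < y < x /\
                 expR (gamma * (x - y)) - m * derive1 g y = 0].

(* h(m) = int_0^{d(m)} e^{gamma x} dF + int_{d(m)}^oo e^{gamma (x - I_m(x))} dF
        = int_[0,oo) e^{gamma (x - I_m(x))} dF(x)   (since I_m = 0 on [0,d(m)]) *)
Definition hmap d (T : measurableType d) (R : realType) (P : probability T R)
    (X : {RV P >-> R}) (gamma : R) (g : R -> R) (m : R) : R :=
  fine (\int[distribution P X]_(x in `[0%R, +oo[)
          (expR (gamma * (x - Im gamma g m x)))%:E)%E.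

Definition Mmax d (T : measurableType d) (R : realType) (P : probability T R)
    (X : {RV P >-> R}) (gamma : R) : R :=
  fine (\int[distribution P X]_(x in `[0%R, +oo[) (expR (gamma * x))%:E)%E.

From HB Require Import structures.
From mathcomp Require Import all_boot all_order all_algebra.
From mathcomp Require Import all_classical all_reals all_analysis.
From mathcomp Require Import measurable_realfun.
From Pilot Require Import Defs.
Set Implicit Arguments. Unset Strict Implicit. Unset Printing Implicit Defensive.
Import Order.TTheory GRing.Theory Num.Theory.
Import numFieldNormedType.Exports.
Local Open Scope classical_set_scope.
Local Open Scope ring_scope.

(* The orbit of a nondecreasing self-map of a compact interval is monotone,
   in the direction given by the sign of h(M0) - M0, and bounded, so it
   converges inside the interval.  Here h maps [1, Mmax] into itself because
   0 <= I_m(x) <= x, and h is nondecreasing because I_m(x) is nonincreasing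
   in m: the first-order condition e^{gamma (x - y)} - m g'(y) is decreasing
   both in y (g is convex) and in m (g' > 0), so its root moves left as m
   grows. *)

Section monotone_iteration.
Variables (R : realType) (h : R -> R) (a b : R).
Hypothesis h_itv : forall x, a <= x <= b -> a <= h x <= b.
Hypothesis h_ndecr : forall x y, a <= x -> x <= y -> y <= b -> h x <= h y.

Lemma iter_itv x0 : a <= x0 <= b -> forall n, a <= iter n h x0 <= b.
Proof. by move=> x0ab; elim=> //= n; exact: h_itv. Qed.

Lemma iter_ndecr_step x0 n : a <= x0 <= b -> x0 <= h x0 ->
  iter n h x0 <= iter n.+1 h x0.
Proof.
move=> x0ab x0h; elim: n => //= n IH.
by have /andP[an _] := iter_itv x0ab n; have /andP[_ bn] := iter_itv x0ab n.+1;
  exact: h_ndecr.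
Qed.

Lemma iter_nincr_step x0 n : a <= x0 <= b -> h x0 <= x0 ->
  iter n.+1 h x0 <= iter n h x0.
Proof.
move=> x0ab hx0; elim: n => //= n IH.
by have /andP[an _] := iter_itv x0ab n.+1; have /andP[_ bn] := iter_itv x0ab n;
  exact: h_ndecr.
Qed.

Lemma cvgn_iter_itv x0 : a <= x0 <= b ->
  exists l, iter n h x0 @[n --> \oo] --> l /\ a <= l <= b.
Proof.
move=> x0ab; set u := fun n => iter n h x0.
have u_itv := iter_itv x0ab.
have cu : cvgn u.
  have [x0h|hx0] := leP x0 (h x0).
    apply: nondecreasing_is_cvgn.
      by apply/nondecreasing_seqP => n; exact: iter_ndecr_step.
    by exists b => _ [n _ <-]; have /andP[] := u_itv n.
  apply: nonincreasing_is_cvgn.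
    by apply/nonincreasing_seqP => n; apply: iter_nincr_step => //; exact: ltW.
  by exists a => _ [n _ <-]; have /andP[] := u_itv n.
exists (limn u); split => //; apply/andP; split.
- by apply: limr_ge => //; apply: nearW => n; have /andP[] := u_itv n.
- by apply: limr_le => //; apply: nearW => n; have /andP[] := u_itv n.
Qed.

End monotone_iteration.


Section cost_function.
Variables (R : realType) (g : R -> R).
Hypothesis gG : in_G g.

Lemma continuous_derive1_cost : continuous (derive1 g).
Proof.
case: gG => dg _ x.
by apply/differentiable_continuous/derivable1_diffP; exact: (dg x).2.
Qed.

Lemma derive1_cost0_ge1 : 1 <= derive1 g 0.
Proof.
case: gG => dg [_ [g0 [_ [g_ge _]]]].
(* g'(0) is also the right limit of g(t)/t, and g(t) >= t. *)
have dg0 := (dg 0).1.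
rewrite derive1E /derive cvg_at_rightE //; apply: limr_ge.
  by apply/cvg_ex; eexists; apply: cvg_dnbhs_at_right; exact: dg0.
near=> t; have t0 : 0 < t by near: t; exact: nbhs_right_gt.
rewrite /= g0 subr0 addr0 [_ *: 1]mulr1 /GRing.scale /= ler_pdivlMl // mulr1.
exact/g_ge/ltW.
Unshelve. all: end_near.
Qed.

Lemma derive1_cost_ndecr x y : 0 <= x -> x <= y -> derive1 g x <= derive1 g y.
Proof.
have [dg [d2g _]] := gG.
apply: ger0_derive1_ndecry.
- by move=> z _; exact: (dg z).2.
- by move=> z; rewrite in_itv /= andbT => /ltW; exact: d2g.
- by apply: continuous_subspaceT; exact: continuous_derive1_cost.
Qed.

Lemma derive1_cost_ge1 y : 0 <= y -> 1 <= derive1 g y.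
Proof.
by move=> y0; apply: le_trans derive1_cost0_ge1 _; exact: derive1_cost_ndecr.
Qed.

End cost_function.

Section retention.
Variables (R : realType) (g : R -> R) (gamma : R).
Hypothesis gG : in_G g.
Hypothesis gamma0 : 0 < gamma.

(* [I_m(x)] is the root in [y] of the first-order condition [foc m x y = 0]. *)
Definition foc (m x y : R) := expR (gamma * (x - y)) - m * derive1 g y.

Lemma foc_decr m x y1 y2 :
  0 <= m -> 0 <= y1 -> y1 < y2 -> foc m x y2 < foc m x y1.
Proof.
move=> m0 y10 y12; rewrite /foc ltr_leB //.
  by rewrite ltr_expR ltr_pM2l // ltrD2l ltrN2.
by rewrite ler_wpM2l // derive1_cost_ndecr // ltW.
Qed.

Lemma foc_nincr_m m m' x y : 0 <= y -> m <= m' -> foc m' x y <= foc m x y.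
Proof.
move=> y0 mm'; rewrite /foc lerD2l lerN2 ler_wpM2r //.
exact: le_trans ler01 (derive1_cost_ge1 gG y0).
Qed.

Lemma continuous_foc m x : continuous (foc m x).
Proof.
move=> y; apply: cvgB.
  apply: continuous_comp; last exact: continuous_expR.
  by apply: cvgM; [exact: cvg_cst | apply: cvgB; [exact: cvg_cst | exact: cvg_id]].
by apply: cvgM; [exact: cvg_cst | exact: continuous_derive1_cost].
Qed.

Lemma dlev_ler m m' : 0 < m -> m <= m' -> dlev gamma g m <= dlev gamma g m'.
Proof.
move=> m0 mm'; have m'0 := lt_le_trans m0 mm'.
have g'0 := lt_le_trans ltr01 (derive1_cost0_ge1 gG).
rewrite /dlev ler_pM2l ?invr_gt0 // ler_ln ?posrE ?mulr_gt0 //.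
by rewrite ler_wpM2l // ltW.
Qed.

Lemma foc0_gt0 m x : 0 < m -> dlev gamma g m < x -> 0 < foc m x 0.
Proof.
move=> m0; have g'0 := lt_le_trans ltr01 (derive1_cost0_ge1 gG).
rewrite /foc subr0 subr_gt0 /dlev ltr_pdivrMl // -ltr_expR.
by rewrite lnK ?posrE ?mulr_gt0 // mulrC.
Qed.

Lemma foc_root m x y :
  0 < m -> dlev gamma g m < x -> 0 <= y -> foc m x y <= 0 ->
  exists2 c, 0 < c <= y & foc m x c = 0.
Proof.
move=> m0 dx y0 fy; have f0 := foc0_gt0 m0 dx.
have [c] : exists2 c, c \in `[0, y] & foc m x c = 0.
  apply: IVT => //; first by apply: continuous_subspaceT; exact: continuous_foc.
  by rewrite ge_min le_max fy (ltW f0) !orbT.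
rewrite in_itv /= => /andP[c0 cy] fc; exists c => //.
rewrite cy andbT lt_neqAle c0 andbT.
by apply: contraTneq f0 => c0'; subst c; rewrite fc ltxx.
Qed.

Lemma Im_itv m x : 0 <= x -> 0 <= Defs.Im gamma g m x <= x.
Proof.
move=> x0; rewrite /Defs.Im; case: ifP => _; first by rewrite lexx.
case: xgetP => [y -> [/andP[y0 yx] _]|_]; last by rewrite x0 lexx.
by rewrite (ltW y0) (ltW yx).
Qed.

Lemma Im_nincr m m' x : 0 < m -> m <= m' -> 0 <= x ->
  Defs.Im gamma g m' x <= Defs.Im gamma g m x.
Proof.
move=> m0 mm' x0; have m'0 := lt_le_trans m0 mm'.
have [xdm'|dm'x] := leP x (dlev gamma g m').
  by rewrite {1}/Defs.Im xdm'; have /andP[] := Im_itv m x0.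
have dmx := le_lt_trans (dlev_ler m0 mm') dm'x.
rewrite /Defs.Im (lt_geF dm'x) (lt_geF dmx).
case: xgetP => [y' _ [/andP[y'0 y'x] fy']|noroot'];
  case: xgetP => [y _ [/andP[y0 yx] fy]|_] //.
- rewrite leNgt; apply/negP => yy'.
  have := foc_decr x (ltW m'0) (ltW y0) yy'.
  by rewrite [foc _ _ y']fy' ltNge -fy foc_nincr_m // ltW.
- exact: ltW.
- have fy0 : foc m' x y <= 0 by rewrite -fy; exact: foc_nincr_m (ltW y0) mm'.
  have [c /andP[c0 cy] fc] := foc_root m'0 dm'x (ltW y0) fy0.
  by case: (noroot' c); split; [rewrite c0 (le_lt_trans cy yx) | exact: fc].
Qed.

End retention.

(* No measurability is needed: a nonnegative integral is a supremum over the
   simple functions below the integrand.  This matters because [Im] is defined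
   by choice and is not known to be measurable. *)
Lemma ge0_le_integral_nomeas d (T : measurableType d) (R : realType)
    (mu : {measure set T -> \bar R}) (D : set T) (f1 f2 : T -> \bar R) :
  (forall x, D x -> (0 <= f1 x)%E) -> (forall x, D x -> (f1 x <= f2 x)%E) ->
  (\int[mu]_(x in D) f1 x <= \int[mu]_(x in D) f2 x)%E.
Proof.
move=> f10 f12; have f20 x : D x -> (0 <= f2 x)%E.
  by move=> Dx; exact: le_trans (f10 x Dx) (f12 x Dx).
rewrite !ge0_integralE //; apply: ereal_sup_le => _ [h hf1 <-].
exists h => //= x; apply: le_trans (hf1 x) _.
by rewrite /patch; case: ifP => // /set_mem /f12.
Qed.

Section iteration_map.
Variables (d : measure_display) (T : measurableType d) (R : realType)
  (P : probability T R) (X : {RV P >-> R}) (gamma : R).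
Hypothesis X_ge0 : forall w, 0 <= X w.
Hypothesis gamma0 : 0 < gamma.
Hypothesis expX_fin : (\int[P]_w (expR (gamma * X w))%:E < +oo)%E.
Variable g : R -> R.
Hypothesis gG : in_G g.

Local Notation mu := (distribution P X).

Definition retained_moment (f : R -> R) :=
  (\int[mu]_(x in `[0%R, +oo[) (expR (gamma * (x - f x)))%:E)%E.

Lemma retained_moment_le f1 f2 : (forall x, 0 <= x -> f2 x <= f1 x) ->
  (retained_moment f1 <= retained_moment f2)%E.
Proof.
move=> f21; apply: ge0_le_integral_nomeas => x.
  by rewrite lee_fin expR_ge0.
rewrite /= in_itv /= andbT => x0.
by rewrite lee_fin ler_expR ler_pM2l // lerD2l lerN2 f21.
Qed.

Lemma retained_moment_id : retained_moment id = 1%E.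
Proof.
have mu_nonneg : mu `[0%R, +oo[ = 1%E.
  rewrite /distribution /pushforward /=.
  have -> : X @^-1` `[0%R, +oo[ = setT.
    by apply/seteqP; split => // w _ /=; rewrite in_itv /= andbT X_ge0.
  exact: probability_setT.
rewrite /retained_moment.
under eq_integral do rewrite subrr mulr0 expR0.
by rewrite integral_cst // mul1e; exact: mu_nonneg.
Qed.

Lemma retained_moment0_lt_pinfty : (retained_moment (fun=> 0%R) < +oo)%E.
Proof.
have mexp : measurable_fun [set: R] (fun x : R => (expR (gamma * x))%:E).
  apply/measurable_EFinP; apply: continuous_measurable_fun => x.
  apply: continuous_comp; last exact: continuous_expR.
  by apply: cvgM; [exact: cvg_cst | exact: cvg_id].
have EX : (\int[P]_w (expR (gamma * X w))%:E =
            \int[mu]_x (expR (gamma * x))%:E)%E.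
  by rewrite (ge0_integral_distribution _ mexp).
apply: le_lt_trans expX_fin; rewrite EX /retained_moment.
under eq_integral do rewrite subr0.
exact: ge0_subset_integral.
Qed.

Lemma fine_retained_moment_le f1 f2 :
  (forall x, 0 <= x -> 0 <= f2 x <= f1 x) ->
  fine (retained_moment f1) <= fine (retained_moment f2).
Proof.
move=> f21; have f2_le : (retained_moment f2 <= retained_moment (fun=> 0%R))%E.
  by apply: retained_moment_le => x /f21 /andP[].
have f12 : (retained_moment f1 <= retained_moment f2)%E.
  by apply: retained_moment_le => x /f21 /andP[].
have f1_ge0 : (0 <= retained_moment f1)%E.
  by apply: integral_ge0 => x _; rewrite lee_fin expR_ge0.
apply: fine_le => //; rewrite ge0_fin_numE ?(le_trans f1_ge0) //.
  exact: le_lt_trans f12 (le_lt_trans f2_le retained_moment0_lt_pinfty).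
exact: le_lt_trans f2_le retained_moment0_lt_pinfty.
Qed.

Lemma hmap_itv m : 1 <= hmap X gamma g m <= Mmax X gamma.
Proof.
have Mmax_moment : Mmax X gamma = fine (retained_moment (fun=> 0%R)).
  rewrite /Mmax /retained_moment; congr (fine _).
  by apply: eq_integral => x _; rewrite subr0.
apply/andP; split.
  have <- : fine (retained_moment id) = 1 by rewrite retained_moment_id.
  by apply: fine_retained_moment_le => x; exact: Im_itv.
rewrite Mmax_moment; apply: fine_retained_moment_le => x x0.
by rewrite lexx /=; have /andP[] := Im_itv g gamma m x0.
Qed.

Lemma hmap_ndecr m m' :
  0 < m -> m <= m' -> hmap X gamma g m <= hmap X gamma g m'.
Proof.
move=> m0 mm'; apply: fine_retained_moment_le => x x0.
by rewrite Im_nincr // andbT; have /andP[] := Im_itv g gamma m' x0.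
Qed.

End iteration_map.

Theorem theorem2p3 (d : measure_display) (T : measurableType d) (R : realType)
  (P : probability T R) (X : {RV P >-> R}) (gamma : R) (g : R -> R)
  (M0 : R) :
  (forall w : T, 0 <= X w) ->
  0 < gamma ->
  (\int[P]_w (expR (gamma * X w))%:E < +oo)%E ->
  in_G g ->
  1 <= M0 <= Mmax X gamma ->
  exists Mstar : R,
    (fun n : nat => iter n (hmap X gamma g) M0) @ \oo --> Mstar /\
    1 <= Mstar <= Mmax X gamma.
Proof.
move=> X_ge0 gamma0 expX_fin gG M0_itv.
apply: (cvgn_iter_itv _ _ M0_itv) => [m _|m m' m1 mm' _].
- exact: hmap_itv.
- exact: hmap_ndecr (lt_le_trans ltr01 m1) mm'.
Qed.
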